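(* Let $(X,d,W)$ be a UCW-hyperbolic space with monotone modulus of uniform convexity $\eta$, $C\subseteq X$ nonempty and convex, $\mu\ge1$, and $T:C\to C$ satisfying condition $(E_\mu)$. Let $L\in\mathbb{N}$, $L\ge2$, $(\lambda_n)\subseteq[1/L,1-1/L]$, $x\in C$ and $x_0=x$, $x_{n+1}=(1-\lambda_n)x_n+\lambda_nTx_n$. Let $b>0$ be such that for every $\gamma>0$ there exists $p\in C$ with $d(x,p)\le b$ and $d(p,Tp)\le\gamma$. Then for every $k\in\mathbb{N}$ and $g:\mathbb{N}\to\mathbb{N}$ there exists $N\le\Phi^+$ such that $d(x_m,Tx_m)\le\frac1{k+1}$ for all $m\in[N,N+g(N)]$, where $\Phi^+=h^{(M)}(0)$ is the $M$-fold iterate of $h(n)=g(n)+n+1$ applied to $0$, $M=\lceil3(b+1)/\theta\rceil$ and $\theta=\frac1{4(k+1)L^2}\eta\left(b+1,\frac1{4(k+1)(b+1)}\right)$. If moreover $\eta(r,\varepsilon)\ge\varepsilon\cdot\tilde\eta(r,\varepsilon)$ with $\tilde\eta$ increasing in $\varepsilon$, the same holds with $\eta$ replaced by $\tilde\eta$ in the definition of $\theta$.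
   Context: A $W$-hyperbolic space is a metric space $(X,d)$ with $W:X\times X\times[0,1]\to X$, writing $(1-\lambda)x+\lambda y:=W(x,y,\lambda)$, such that for all $x,y,z,w\in X$, $\lambda,\tilde\lambda\in[0,1]$: $d(z,W(x,y,\lambda))\le(1-\lambda)d(z,x)+\lambda d(z,y)$; $d(W(x,y,\lambda),W(x,y,\tilde\lambda))=|\lambda-\tilde\lambda|d(x,y)$; $W(x,y,\lambda)=W(y,x,1-\lambda)$; $d(W(x,z,\lambda),W(y,w,\lambda))\le(1-\lambda)d(x,y)+\lambda d(z,w)$. It is uniformly convex with modulus $\eta:(0,\infty)\times(0,2]\to(0,1]$ if for all $r>0$, $\varepsilon\in(0,2]$, $a,x,y\in X$: $d(x,a)\le r$, $d(y,a)\le r$, $d(x,y)\ge\varepsilon r$ imply $d(\frac12x+\frac12y,a)\le(1-\eta(r,\varepsilon))r$. It is UCW-hyperbolic if this holds with $\eta$ monotone, i.e. nonincreasing in the first argument. $C$ is convex if $W(x,y,\lambda)\in C$ for $x,y\in C$. $T$ satisfies condition $(E_\mu)$ if $d(x,Ty)\le\mu d(Tx,x)+d(x,y)$ for all $x,y\in C$. *)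

From Stdlib Require Import Reals Lra Lia ZArith.
Open Scope R_scope.

Definition metric_space {X : Type} (d : X -> X -> R) : Prop :=
  (forall x y, d x y = 0 <-> x = y) /\
  (forall x y, d x y = d y x) /\
  (forall x y z, d x z <= d x y + d y z).

(* W-hyperbolic space (Kohlenbach); W x y l stands for (1-l)x + l y *)
Definition W_hyperbolic {X : Type} (d : X -> X -> R) (W : X -> X -> R -> X) : Prop :=
  metric_space d /\
  (forall x y z l, 0 <= l <= 1 ->
     d z (W x y l) <= (1 - l) * d z x + l * d z y) /\
  (forall x y l l', 0 <= l <= 1 -> 0 <= l' <= 1 ->
     d (W x y l) (W x y l') = Rabs (l - l') * d x y) /\
  (forall x y l, 0 <= l <= 1 -> W x y l = W y x (1 - l)) /\
  (forall x y z w l, 0 <= l <= 1 ->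
     d (W x z l) (W y w l) <= (1 - l) * d x y + l * d z w).

Definition modulus_uc {X : Type} (d : X -> X -> R) (W : X -> X -> R -> X)
  (eta : R -> R -> R) : Prop :=
  (forall r e, 0 < r -> 0 < e <= 2 -> 0 < eta r e <= 1) /\
  (forall r e a x y, 0 < r -> 0 < e <= 2 ->
     d x a <= r -> d y a <= r -> d x y >= e * r ->
     d (W x y (1/2)) a <= (1 - eta r e) * r).

Definition monotone_modulus (eta : R -> R -> R) : Prop :=
  forall r s e, 0 < s <= r -> 0 < e <= 2 -> eta r e <= eta s e.

Definition UCW_hyperbolic {X : Type} (d : X -> X -> R) (W : X -> X -> R -> X)
  (eta : R -> R -> R) : Prop :=
  W_hyperbolic d W /\ modulus_uc d W eta /\ monotone_modulus eta.

Definition convex_set {X : Type} (W : X -> X -> R -> X) (C : X -> Prop) : Prop :=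
  forall x y l, C x -> C y -> 0 <= l <= 1 -> C (W x y l).

Definition condition_E {X : Type} (d : X -> X -> R) (C : X -> Prop)
  (T : X -> X) (mu : R) : Prop :=
  forall x y, C x -> C y -> d x (T y) <= mu * d (T x) x + d x y.

Fixpoint KM {X : Type} (W : X -> X -> R -> X) (T : X -> X) (lam : nat -> R)
  (x : X) (n : nat) : X :=
  match n with
  | O => x
  | S n' => W (KM W T lam x n') (T (KM W T lam x n')) (lam n')
  end.

(* ceiling of a real, as a natural number (0 for nonpositive reals) *)
Definition nat_ceil (x : R) : nat := Z.to_nat (- Int_part (- x)).

(* theta, given the value v = eta(b+1, 1/(4(k+1)(b+1))) *)
Definition theta_val (k L : nat) (v : R) : R :=
  / (4 * INR (S k) * (INR L) ^ 2) * v.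

Definition eps_arg (b : R) (k : nat) : R := / (4 * INR (S k) * (b + 1)).

Definition Phi_plus (b : R) (k L : nat) (g : nat -> nat) (eta : R -> R -> R) : nat :=
  let theta := theta_val k L (eta (b + 1) (eps_arg b k)) in
  let M := nat_ceil (3 * (b + 1) / theta) in
  Nat.iter M (fun n => (g n + n + 1)%nat) 0%nat.

From Stdlib Require Import Reals Lra Lia ZArith Classical.
Open Scope R_scope.

(* Fix an approximate fixed point p with d(x,p) <= b and d(p,Tp) <= gamma.
   By (E_mu) the iteration is quasi-Fejér monotone with respect to p:
   d(x_{n+1},p) <= d(x_n,p) + mu gamma.  When d(x_n,Tx_n) > 1/(k+1), uniform
   convexity improves this to a decrease of d(x_n,p) by a fixed amount delta
   depending only on eta, k, L and b.  If each of the M+1 windows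
   [h^i(0), h^i(0) + g(h^i(0))] contained such a bad index, the distance to p
   would drop by (M+1) delta > b + 1 in total, while gamma is chosen so small
   that the accumulated errors stay below 1: a contradiction. *)

Lemma metric_dist_nonneg {X : Type} (d : X -> X -> R) :
  metric_space d -> forall x y, 0 <= d x y.
Proof.
  intros [Hd [Hs Ht]] x y.
  pose proof (Ht x y x) as H. rewrite (Hs y x) in H.
  assert (d x x = 0) by (apply Hd; reflexivity). lra.
Qed.

Section WHyperbolic.

Variables (X : Type) (d : X -> X -> R) (W : X -> X -> R -> X).
Hypothesis HW : W_hyperbolic d W.

Lemma W_zero x y : W x y 0 = x.
Proof.
  pose proof (metric_dist_nonneg d (proj1 HW)) as Hn.
  destruct HW as [[Hd _] [Hconv _]].
  pose proof (Hconv x y x 0 ltac:(lra)).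
  assert (d x x = 0) by (apply Hd; reflexivity).
  symmetry. apply Hd. pose proof (Hn x (W x y 0)). pose proof (Hn x y). lra.
Qed.

Lemma W_one x y : W x y 1 = y.
Proof.
  destruct HW as [_ [_ [_ [Hsym _]]]].
  rewrite Hsym by lra. replace (1 - 1) with 0 by ring. apply W_zero.
Qed.

Lemma dist_W_l x y l : 0 <= l <= 1 -> d x (W x y l) = l * d x y.
Proof.
  intros Hl. destruct HW as [[_ [Hs _]] [_ [Hlin _]]].
  pose proof (Hlin x y l 0 Hl ltac:(lra)) as H. rewrite W_zero in H.
  rewrite Hs, H, Rabs_right by lra. ring.
Qed.

Lemma dist_W_r x y l : 0 <= l <= 1 -> d (W x y l) y = (1 - l) * d x y.
Proof.
  intros Hl. destruct HW as [_ [_ [Hlin _]]].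
  pose proof (Hlin x y l 1 Hl ltac:(lra)) as H. rewrite W_one in H.
  rewrite H, Rabs_left1 by lra. ring.
Qed.

Section UniformlyConvex.

Variable eta : R -> R -> R.
Hypothesis HU : modulus_uc d W eta.

(* If z <> z', their midpoint is strictly closer to x than l d(x,y) by uniform
   convexity, and no farther from y than (1-l) d(x,y) by convexity of the
   metric, contradicting the triangle inequality through the midpoint. *)
Lemma W_between_unique x y z z' l : 0 < l < 1 ->
  d x z = l * d x y -> d z y = (1 - l) * d x y ->
  d x z' = l * d x y -> d z' y = (1 - l) * d x y -> z = z'.
Proof.
  intros Hl H1 H2 H3 H4.
  pose proof (metric_dist_nonneg d (proj1 HW)) as Hn.
  destruct HU as [Hpos Huc].
  destruct HW as [[Hd [Hs Ht]] [Hconv _]].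
  destruct (Req_dec (d x y) 0) as [E|E].
  { assert (x = z) by (apply Hd; rewrite H1, E; ring).
    assert (x = z') by (apply Hd; rewrite H3, E; ring). congruence. }
  destruct (Req_dec (d z z') 0) as [E'|E']; [apply Hd; exact E'|].
  exfalso.
  assert (Dxy : 0 < d x y) by (pose proof (Hn x y); lra).
  assert (Dzz : 0 < d z z') by (pose proof (Hn z z'); lra).
  set (r := l * d x y) in *.
  assert (Hr : 0 < r) by (unfold r; nra).
  assert (Hzz : d z z' <= 2 * r) by (pose proof (Ht z x z'); rewrite (Hs z x) in *; lra).
  set (e := d z z' / r).
  assert (Her : e * r = d z z') by (unfold e; field; lra).
  assert (He : 0 < e <= 2) by (split; [apply Rdiv_lt_0_compat; lra | nra]).
  set (w := W z z' (1/2)).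
  assert (Hxw : d w x <= (1 - eta r e) * r)
    by (apply Huc; try rewrite (Hs _ x); lra).
  assert (Hyw : d y w <= 1/2 * d y z + 1/2 * d y z')
    by (replace (1/2) with (1 - 1/2) at 1 by field; apply Hconv; lra).
  rewrite (Hs y z), (Hs y z') in Hyw.
  pose proof (Ht x w y) as Htr. rewrite (Hs x w), (Hs w y) in Htr.
  pose proof (Hpos r e Hr He).
  assert (0 < eta r e * r) by nra.
  rewrite H2, H4 in Hyw. unfold r in *. lra.
Qed.

Lemma W_split_half x y l : 0 < l <= 1/2 ->
  W x y l = W x (W x y (1/2)) (2 * l).
Proof.
  intros Hl.
  destruct HW as [[_ [Hs Ht]] [Hconv _]].
  set (m := W x y (1/2)).
  assert (Hxm : d x m = 1/2 * d x y) by (apply dist_W_l; lra).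
  assert (Hmy : d m y = 1/2 * d x y)
    by (unfold m; rewrite dist_W_r by lra; lra).
  apply (W_between_unique x y _ _ l ltac:(lra)).
  - apply dist_W_l; lra.
  - apply dist_W_r; lra.
  - rewrite dist_W_l, Hxm by lra. lra.
  - apply Rle_antisym.
    + pose proof (Hconv x m y (2 * l) ltac:(lra)) as H.
      rewrite (Hs y x), (Hs y m), Hmy in H. rewrite Hs. nra.
    + pose proof (Ht x (W x m (2 * l)) y) as H.
      rewrite dist_W_l, Hxm in H by lra. nra.
Qed.

Lemma dist_W_uc_half x y a r e l : 0 < r -> 0 < e <= 2 -> 0 < l <= 1/2 ->
  d x a <= r -> d y a <= r -> d x y >= e * r ->
  d (W x y l) a <= (1 - 2 * l * eta r e) * r.
Proof.
  intros Hr He Hl Hxa Hya Hxy.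
  destruct HU as [_ Huc].
  destruct HW as [[_ [Hs _]] [Hconv _]].
  assert (Hma : d (W x y (1/2)) a <= (1 - eta r e) * r) by (apply Huc; auto).
  rewrite W_split_half, Hs by lra.
  pose proof (Hconv x (W x y (1/2)) a (2 * l) ltac:(lra)) as H.
  rewrite (Hs a x), (Hs a (W x y (1/2))) in H.
  assert ((1 - 2 * l) * d x a <= (1 - 2 * l) * r) by (apply Rmult_le_compat_l; lra).
  assert (2 * l * d (W x y (1/2)) a <= 2 * l * ((1 - eta r e) * r))
    by (apply Rmult_le_compat_l; lra).
  lra.
Qed.

Lemma dist_W_uc x y a r e l Lr : 2 <= Lr -> / Lr <= l <= 1 - / Lr ->
  0 < r -> 0 < e <= 2 -> d x a <= r -> d y a <= r -> d x y >= e * r ->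
  d (W x y l) a <= r - 2 * / Lr * eta r e * r.
Proof.
  intros HL Hl Hr He Hxa Hya Hxy.
  destruct HW as [[_ [Hs _]] [_ [_ [Hsym _]]]].
  pose proof (proj1 HU r e Hr He) as Heta.
  assert (HLi : 0 < / Lr <= 1/2).
  { split; [apply Rinv_0_lt_compat; lra|].
    replace (1/2) with (/ 2) by field. apply Rinv_le_contravar; lra. }
  assert (0 <= eta r e * r) by nra.
  destruct (Rle_lt_dec l (1/2)) as [Hl2|Hl2].
  - pose proof (dist_W_uc_half x y a r e l Hr He ltac:(lra) Hxa Hya Hxy).
    assert (/ Lr * (eta r e * r) <= l * (eta r e * r)) by (apply Rmult_le_compat_r; lra).
    nra.
  - rewrite Hsym by lra.
    assert (Hyx : d y x >= e * r) by (rewrite Hs; lra).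
    pose proof (dist_W_uc_half y x a r e (1 - l) Hr He ltac:(lra) Hya Hxa Hyx).
    assert (/ Lr * (eta r e * r) <= (1 - l) * (eta r e * r)) by (apply Rmult_le_compat_r; lra).
    nra.
Qed.

End UniformlyConvex.

End WHyperbolic.

Lemma quasi_fejer_potential (a : nat -> R) (u : R) :
  (forall n, a (S n) <= a n + u) ->
  forall n m, (n <= m)%nat -> a m - INR m * u <= a n - INR n * u.
Proof.
  intros Ha n m Hnm. induction Hnm as [|m _ IH]; [lra|].
  pose proof (Ha m). rewrite S_INR. lra.
Qed.

Lemma strictly_increasing_le (N : nat -> nat) :
  (forall i, N i < N (S i))%nat -> forall i j, (i <= j)%nat -> (N i <= N j)%nat.
Proof. intros HN i j Hij. induction Hij as [|j _ IH]; [lia|]. specialize (HN j). lia. Qed.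

Lemma potential_descent (a : nat -> R) (u delta : R) (bad : nat -> Prop)
  (N g : nat -> nat) (M : nat) :
  (forall n, a (S n) <= a n + u) ->
  (forall i, N i + g (N i) < N (S i))%nat ->
  (forall m, (m < N (S M))%nat -> bad m -> a (S m) <= a m + u - delta) ->
  (forall i, (i <= M)%nat -> exists m, (N i <= m <= N i + g (N i))%nat /\ bad m) ->
  a (N (S M)) - INR (N (S M)) * u
    <= a (N 0%nat) - INR (N 0%nat) * u - INR (S M) * delta.
Proof.
  intros Ha HN Hdec Hbad.
  assert (Hmono : forall i j, (i <= j)%nat -> (N i <= N j)%nat).
  { apply strictly_increasing_le. intro i. specialize (HN i). lia. }
  enough (H : forall i, (i <= S M)%nat ->
    a (N i) - INR (N i) * u <= a (N 0%nat) - INR (N 0%nat) * u - INR i * delta)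
    by (apply H; lia).
  induction i as [|i IH]; intros Hi; [simpl; lra|].
  destruct (Hbad i ltac:(lia)) as [m [Hm Hbm]].
  pose proof (HN i). pose proof (Hmono (S i) (S M) Hi).
  pose proof (Hdec m ltac:(lia) Hbm).
  pose proof (quasi_fejer_potential a u Ha (S m) (N (S i)) ltac:(lia)).
  pose proof (quasi_fejer_potential a u Ha (N i) m ltac:(lia)).
  pose proof (IH ltac:(lia)). rewrite !S_INR in *. lra.
Qed.

Section Metastability.

Variables (X : Type) (d : X -> X -> R) (T : X -> X) (C : X -> Prop) (s : nat -> X).
Variables (mu b eps delta : R).
Hypotheses (Hd : forall y z, 0 <= d y z) (Hmu : 0 < mu).
Hypothesis Happrox : forall gamma, 0 < gamma ->
  exists p, C p /\ d (s 0%nat) p <= b /\ d p (T p) <= gamma.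
Hypothesis Hfejer : forall p gamma n, C p -> d p (T p) <= gamma ->
  d (s (S n)) p <= d (s n) p + mu * gamma.
Hypothesis Hdecrease : forall p gamma n, C p -> d p (T p) <= gamma ->
  d (s n) p + mu * gamma <= b + 1 -> eps < d (s n) (T (s n)) ->
  d (s (S n)) p <= d (s n) p + mu * gamma - delta.

Lemma metastable_of_uniform_decrease (g : nat -> nat) (M : nat) :
  b + 1 < INR (S M) * delta ->
  exists N, (N <= Nat.iter M (fun n => (g n + n + 1)%nat) 0)%nat /\
    forall m, (N <= m <= N + g N)%nat -> d (s m) (T (s m)) <= eps.
Proof.
  intros HM.
  set (N := fun i => Nat.iter i (fun n => (g n + n + 1)%nat) 0%nat).
  assert (HN : forall i, (N i + g (N i) < N (S i))%nat) by (intro i; unfold N; simpl; lia).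
  destruct (classic (exists i, (i <= M)%nat /\
     forall m, (N i <= m <= N i + g (N i))%nat -> d (s m) (T (s m)) <= eps))
    as [[i [Hi Hgood]] | Hnone].
  { exists (N i). split; [|exact Hgood]. change (N i <= N M)%nat.
    apply strictly_increasing_le; [intro j; specialize (HN j); lia | exact Hi]. }
  exfalso.
  assert (Hbad : forall i, (i <= M)%nat ->
    exists m, (N i <= m <= N i + g (N i))%nat /\ eps < d (s m) (T (s m))).
  { intros i Hi. apply NNPP. intros Hno. apply Hnone. exists i. split; [exact Hi|].
    intros m Hm. apply Rnot_lt_le. intros Hlt. apply Hno. exists m. auto. }
  set (P := N (S M)).
  pose proof (pos_INR P) as HP.
  (* gamma is chosen so that the errors over the first P steps sum to less than 1 *)
  set (gamma := / (mu * (INR P + 1))).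
  assert (Hgamma : 0 < gamma) by (apply Rinv_0_lt_compat; nra).
  assert (Hmg : mu * gamma * (INR P + 1) = 1) by (unfold gamma; field; lra).
  assert (Hu : 0 < mu * gamma) by nra.
  destruct (Happrox gamma Hgamma) as [p [Cp [H0 Hp]]].
  assert (Ha : forall n, d (s (S n)) p <= d (s n) p + mu * gamma)
    by (intro n; apply Hfejer; assumption).
  assert (Hrange : forall m, (m < P)%nat -> d (s m) p + mu * gamma <= b + 1).
  { intros m Hm.
    pose proof (quasi_fejer_potential (fun n => d (s n) p) _ Ha 0 m ltac:(lia)) as H.
    cbv beta in H. rewrite INR_0 in H.
    assert (HmP : INR m + 1 <= INR P) by (rewrite <- S_INR; apply le_INR; lia).
    assert ((INR m + 1) * (mu * gamma) <= (INR P + 1) * (mu * gamma))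
      by (apply Rmult_le_compat_r; lra).
    lra. }
  pose proof (potential_descent (fun n => d (s n) p) (mu * gamma) delta
    (fun m => eps < d (s m) (T (s m))) N g M Ha HN
    (fun m Hm Hbm => Hdecrease p gamma m Cp Hp (Hrange m Hm) Hbm) Hbad) as H.
  cbv beta in H. change (N 0%nat) with 0%nat in H. rewrite INR_0 in H.
  fold P in H. pose proof (Hd (s P) p).
  lra.
Qed.

End Metastability.

Lemma nat_ceil_ge y : y <= INR (nat_ceil y).
Proof.
  unfold nat_ceil. pose proof (base_Int_part (- y)) as [H1 H2].
  destruct (Z_le_gt_dec 0 (- Int_part (- y))) as [Hz|Hz].
  - rewrite INR_IZR_INZ, Z2Nat.id by lia. rewrite opp_IZR. lra.
  - assert (IZR (- Int_part (- y)) < 0) by (apply IZR_lt; lia).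
    rewrite opp_IZR in H. pose proof (pos_INR (Z.to_nat (- Int_part (- y)))). lra.
Qed.

Lemma INR_S_ge1 (k : nat) : 1 <= INR (S k).
Proof. rewrite S_INR. pose proof (pos_INR k). lra. Qed.

Lemma eps_arg_spec (b : R) (k : nat) : 0 < b ->
  0 < eps_arg b k <= 2 /\ eps_arg b k * (b + 1) = / (4 * INR (S k)).
Proof.
  intros Hb. pose proof (INR_S_ge1 k). unfold eps_arg.
  assert (Hz : 4 <= 4 * INR (S k) * (b + 1)) by nra.
  assert (/ (4 * INR (S k) * (b + 1)) <= / 4) by (apply Rinv_le_contravar; lra).
  split; [split; [apply Rinv_0_lt_compat|]; lra | field; lra].
Qed.

(* For the decrease delta = (2/L) v/(2(k+1)) one has (3(b+1)/theta) delta = 12 L (b+1). *)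
Lemma iteration_count_large (b v : R) (k L : nat) : 0 < b -> 0 < v -> (2 <= L)%nat ->
  b + 1 < INR (S (nat_ceil (3 * (b + 1) / theta_val k L v)))
            * (2 * / INR L * (v * / (2 * INR (S k)))).
Proof.
  intros Hb Hv HL.
  pose proof (INR_S_ge1 k) as HK.
  assert (HLr : 2 <= INR L) by (apply (le_INR 2) in HL; simpl in HL; lra).
  set (th := theta_val k L v).
  set (delta := 2 * / INR L * (v * / (2 * INR (S k)))).
  assert (Hdelta : 0 < delta).
  { unfold delta. assert (0 < / INR L) by (apply Rinv_0_lt_compat; lra).
    assert (0 < / (2 * INR (S k))) by (apply Rinv_0_lt_compat; lra).
    assert (0 < v * / (2 * INR (S k))) by nra. nra. }
  assert (Hratio : 3 * (b + 1) / th * delta = 12 * (b + 1) * INR L).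
  { unfold th, theta_val, delta. field. repeat split; lra. }
  pose proof (nat_ceil_ge (3 * (b + 1) / th)) as Hc.
  assert (3 * (b + 1) / th * delta <= INR (nat_ceil (3 * (b + 1) / th)) * delta)
    by (apply Rmult_le_compat_r; lra).
  rewrite S_INR. nra.
Qed.

Definition modulus_gain (eta : R -> R -> R) (k : nat) (b v : R) : Prop :=
  forall r t, / (2 * INR (S k)) <= r <= b + 1 -> / INR (S k) < t <= 2 * r ->
  exists e, 0 < e <= 2 /\ e * r <= t /\ v * / (2 * INR (S k)) <= eta r e * r.

Lemma modulus_gain_monotone (eta : R -> R -> R) (k : nat) (b : R) : 0 < b ->
  (forall r e, 0 < r -> 0 < e <= 2 -> 0 < eta r e) -> monotone_modulus eta ->
  modulus_gain eta k b (eta (b + 1) (eps_arg b k)).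
Proof.
  intros Hb Hpos Hmon r t Hr Ht.
  pose proof (INR_S_ge1 k) as HK.
  destruct (eps_arg_spec b k Hb) as [He He1].
  assert (Hr0 : 0 < / (2 * INR (S k))) by (apply Rinv_0_lt_compat; lra).
  exists (eps_arg b k). split; [exact He|]. split.
  - assert (eps_arg b k * r <= eps_arg b k * (b + 1)) by (apply Rmult_le_compat_l; lra).
    assert (/ (4 * INR (S k)) <= / INR (S k)) by (apply Rinv_le_contravar; lra).
    lra.
  - assert (Hm : eta (b + 1) (eps_arg b k) <= eta r (eps_arg b k)) by (apply Hmon; lra).
    pose proof (Hpos (b + 1) (eps_arg b k) ltac:(lra) He).
    apply Rmult_le_compat; lra.
Qed.

Lemma modulus_gain_scaled (eta eta' : R -> R -> R) (k : nat) (b : R) : 0 < b ->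
  monotone_modulus eta ->
  (forall r e, 0 < r -> 0 < e <= 2 -> 0 < eta' r e) ->
  (forall r e, 0 < r -> 0 < e <= 2 -> eta r e >= e * eta' r e) ->
  (forall r e e', 0 < r -> 0 < e <= e' -> e' <= 2 -> eta' r e <= eta' r e') ->
  modulus_gain eta k b (eta' (b + 1) (eps_arg b k)).
Proof.
  intros Hb Hmon Hpos' Hge Hinc r t Hr Ht.
  pose proof (INR_S_ge1 k) as HK. set (K := INR (S k)) in *.
  destruct (eps_arg_spec b k Hb) as [He0 _].
  assert (HrP : 0 < r) by (assert (0 < / (2 * K)) by (apply Rinv_0_lt_compat; lra); lra).
  (* the scale e = 1/(K r) makes e r exactly the threshold 1/K *)
  set (e := / (K * r)).
  assert (Her : e * r = / K) by (unfold e; field; lra).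
  assert (HeP : 0 < e) by (apply Rinv_0_lt_compat; nra).
  assert (He2 : e <= 2).
  { assert (K * / (2 * K) <= K * r) by (apply Rmult_le_compat_l; lra).
    assert (K * / (2 * K) = / 2) by (field; lra).
    unfold e. replace 2 with (/ / 2) by field. apply Rinv_le_contravar; lra. }
  assert (He0e : eps_arg b k <= e).
  { unfold eps_arg, e. fold K. apply Rinv_le_contravar; [nra|].
    assert (K * r <= K * (b + 1)) by (apply Rmult_le_compat_l; lra).
    assert (0 < K * (b + 1)) by nra. lra. }
  exists e. split; [lra|]. split; [lra|].
  set (v := eta' (b + 1) (eps_arg b k)).
  assert (Hv : 0 < v) by (apply Hpos'; lra).
  assert (H1 : eta (b + 1) e <= eta r e) by (apply Hmon; lra).
  assert (H2 : eta (b + 1) e >= e * eta' (b + 1) e) by (apply Hge; lra).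
  assert (H3 : v <= eta' (b + 1) e) by (apply Hinc; lra).
  assert (H4 : e * v <= e * eta' (b + 1) e) by (apply Rmult_le_compat_l; lra).
  assert (e * v * r <= eta r e * r) by (apply Rmult_le_compat_r; lra).
  assert (v * / (2 * K) <= v * / K).
  { apply Rmult_le_compat_l; [lra|]. apply Rinv_le_contravar; lra. }
  replace (e * v * r) with (v * (e * r)) in * by ring. rewrite Her in *. lra.
Qed.

Section KrasnoselskiiMann.

Variables (X : Type) (d : X -> X -> R) (W : X -> X -> R -> X) (eta : R -> R -> R).
Variables (C : X -> Prop) (T : X -> X) (mu : R) (L : nat) (lam : nat -> R) (x : X).
Hypotheses (HW : W_hyperbolic d W) (HU : modulus_uc d W eta).
Hypotheses (Hconv : convex_set W C) (HTC : forall y, C y -> C (T y)).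
Hypotheses (HE : condition_E d C T mu) (Hmu : 1 <= mu).
Hypotheses (HL : (2 <= L)%nat) (Hlam : forall n, / INR L <= lam n <= 1 - / INR L).
Hypothesis Hx : C x.

Local Notation s := (KM W T lam x).

Lemma INR_L_ge2 : 2 <= INR L.
Proof. apply (le_INR 2) in HL. simpl in HL. lra. Qed.

Lemma lam_in_unit n : 0 <= lam n <= 1.
Proof.
  pose proof INR_L_ge2. specialize (Hlam n).
  assert (0 < / INR L) by (apply Rinv_0_lt_compat; lra). lra.
Qed.

Lemma KM_in_C n : C (s n).
Proof. induction n; simpl; auto using lam_in_unit. Qed.

Lemma dist_T_le y p : C y -> C p -> d (T y) p <= d y p + mu * d p (T p).
Proof.
  intros Cy Cp. destruct HW as [[_ [Hs _]] _].
  pose proof (HE p y Cp Cy) as H. rewrite (Hs (T p) p) in H.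
  rewrite (Hs (T y) p), (Hs y p). lra.
Qed.

Lemma dist_KM_succ_le n p : C p -> d (s (S n)) p <= d (s n) p + mu * d p (T p).
Proof.
  intros Cp. simpl.
  pose proof (metric_dist_nonneg d (proj1 HW) p (T p)) as Hp.
  pose proof (dist_T_le (s n) p (KM_in_C n) Cp) as HT.
  pose proof (lam_in_unit n) as Hl.
  destruct HW as [[_ [Hs _]] [Hc _]].
  pose proof (Hc (s n) (T (s n)) p (lam n) Hl) as Hstep.
  rewrite (Hs p (s n)), (Hs p (T (s n))) in Hstep. rewrite Hs.
  assert (lam n * d (T (s n)) p <= lam n * (d (s n) p + mu * d p (T p)))
    by (apply Rmult_le_compat_l; lra).
  assert (0 <= (1 - lam n) * (mu * d p (T p))) by (apply Rmult_le_pos; nra).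
  nra.
Qed.

Lemma dist_KM_T_le n p r : C p -> d (s n) p + mu * d p (T p) <= r ->
  d (s n) (T (s n)) <= 2 * r.
Proof.
  intros Cp Hr.
  pose proof (metric_dist_nonneg d (proj1 HW) p (T p)).
  pose proof (dist_T_le (s n) p (KM_in_C n) Cp).
  destruct HW as [[_ [Hs Ht]] _].
  pose proof (Ht (s n) p (T (s n))). rewrite (Hs p (T (s n))) in *. nra.
Qed.

Lemma dist_KM_succ_uc n p r e : C p -> 0 < r -> 0 < e <= 2 ->
  d (s n) p + mu * d p (T p) <= r -> e * r <= d (s n) (T (s n)) ->
  d (s (S n)) p <= r - 2 * / INR L * eta r e * r.
Proof.
  intros Cp Hr He Hnr Her. simpl.
  pose proof (metric_dist_nonneg d (proj1 HW) p (T p)).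
  pose proof (dist_T_le (s n) p (KM_in_C n) Cp).
  apply (dist_W_uc X d W HW eta HU); auto using INR_L_ge2; nra.
Qed.

Lemma KM_metastable (b v : R) (k : nat) (g : nat -> nat) :
  0 < b -> 0 < v -> modulus_gain eta k b v ->
  (forall gamma, 0 < gamma -> exists p, C p /\ d x p <= b /\ d p (T p) <= gamma) ->
  exists N, (N <= Nat.iter (nat_ceil (3 * (b + 1) / theta_val k L v))
                           (fun n => (g n + n + 1)%nat) 0)%nat /\
    forall m, (N <= m <= N + g N)%nat -> d (s m) (T (s m)) <= / INR (S k).
Proof.
  intros Hb Hv Hgain Happ.
  pose proof (INR_S_ge1 k) as HK. pose proof INR_L_ge2 as HLr.
  pose proof (metric_dist_nonneg d (proj1 HW)) as Hn.
  apply (metastable_of_uniform_decrease X d T C s mu b (/ INR (S k))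
           (2 * / INR L * (v * / (2 * INR (S k))))); auto; try lra.
  - intros p gamma n Cp Hp.
    pose proof (dist_KM_succ_le n p Cp). nra.
  - intros p gamma n Cp Hp Hr Hbad.
    set (r := d (s n) p + mu * gamma) in *.
    assert (Hnr : d (s n) p + mu * d p (T p) <= r) by (unfold r; nra).
    pose proof (dist_KM_T_le n p r Cp Hnr).
    assert (Hr0 : / (2 * INR (S k)) <= r).
    { replace (/ (2 * INR (S k))) with (/ 2 * / INR (S k)) by (field; lra). lra. }
    assert (HrP : 0 < r) by (assert (0 < / (2 * INR (S k))) by (apply Rinv_0_lt_compat; lra); lra).
    destruct (Hgain r (d (s n) (T (s n))) ltac:(lra) ltac:(lra)) as [e [He [Her Hgn]]].
    pose proof (dist_KM_succ_uc n p r e Cp HrP He Hnr Her).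
    assert (0 < / INR L) by (apply Rinv_0_lt_compat; lra).
    assert (2 * / INR L * (v * / (2 * INR (S k))) <= 2 * / INR L * (eta r e * r))
      by (apply Rmult_le_compat_l; lra).
    lra.
  - apply iteration_count_large; auto.
Qed.

End KrasnoselskiiMann.

Theorem theorem7p15
  (X : Type) (d : X -> X -> R) (W : X -> X -> R -> X) (eta : R -> R -> R)
  (C : X -> Prop) (T : X -> X) (mu : R) (L : nat) (lam : nat -> R)
  (x : X) (b : R) :
  UCW_hyperbolic d W eta ->
  (exists c, C c) -> convex_set W C ->
  1 <= mu ->
  (forall y, C y -> C (T y)) -> condition_E d C T mu ->
  (2 <= L)%nat ->
  (forall n, / INR L <= lam n <= 1 - / INR L) ->
  C x ->
  0 < b ->
  (forall gamma, 0 < gamma -> exists p, C p /\ d x p <= b /\ d p (T p) <= gamma) ->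
  (forall (k : nat) (g : nat -> nat),
     exists N, (N <= Phi_plus b k L g eta)%nat /\
       forall m, (N <= m <= N + g N)%nat ->
         d (KM W T lam x m) (T (KM W T lam x m)) <= / INR (S k))
  /\
  (forall eta' : R -> R -> R,
     (forall r e, 0 < r -> 0 < e <= 2 -> 0 < eta' r e) ->
     (forall r e, 0 < r -> 0 < e <= 2 -> eta r e >= e * eta' r e) ->
     (forall r e e', 0 < r -> 0 < e <= e' -> e' <= 2 -> eta' r e <= eta' r e') ->
     forall (k : nat) (g : nat -> nat),
       exists N, (N <= Phi_plus b k L g eta')%nat /\
         forall m, (N <= m <= N + g N)%nat ->
           d (KM W T lam x m) (T (KM W T lam x m)) <= / INR (S k)).
Proof.
  intros [HW [HU Hmon]] _ Hconv Hmu HTC HE HL Hlam Hx Hb Happ.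
  pose proof (proj1 HU) as Hpos.
  assert (Heps : forall k, 0 < eps_arg b k <= 2) by (intro k; apply eps_arg_spec, Hb).
  split.
  - intros k g. unfold Phi_plus.
    apply (KM_metastable X d W eta C T mu L lam x); auto.
    + apply Hpos; [lra | apply Heps].
    + apply modulus_gain_monotone; auto. intros r e Hr He. apply Hpos; auto.
  - intros eta' Hpos' Hge Hinc k g. unfold Phi_plus.
    apply (KM_metastable X d W eta C T mu L lam x); auto.
    + apply Hpos'; [lra | apply Heps].
    + apply modulus_gain_scaled; auto.
Qed.
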